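(* Let $L$ and $R$ be nonempty subsets of a group $G$ with $G=\mathcal{W}(\bar{L})\mathcal{W}(\bar{R})$, and let $k$ be the minimum weak connection length in $G$ relative to $(L,R)$. If $k$ is infinite, then $2\mathrm{S}(G;L,R)$ has infinitely many weakly connected components. If $k$ is finite, then $2\mathrm{S}(G;L,R)$ has exactly $k$ weakly connected components, and all of them have the same number of vertices (the same cardinality). Moreover, if $k$ is finite and $L\cap N_G(L)\neq\emptyset$ or $R\cap N_G(R)\neq\emptyset$, then all weakly connected components are isomorphic as digraphs.
   Context: For nonempty subsets $L,R$ of a group $G$, the two-sided group digraph $2\mathrm{S}(G;L,R)$ has vertex set $G$ and a directed arc $(g,h)$ if and only if $h=l^{-1}gr$ for some $l\in L$, $r\in R$. Write $\bar{L}=L\cup L^{-1}$, $\bar{R}=R\cup R^{-1}$; for nonempty $S$, $\mathcal{W}(S)$ is the set of elements expressible as finite products $s_1\cdots s_n$, $n\ge1$, $s_i\in S$, and $AB=\{ab:a\in A,b\in B\}$. Vertex $g$ is weakly connected to $h$, written $g\sim h$, if there is a sequence $g=g_0,\dots,g_n=h$ such that for each $i$ either $(g_{i-1},g_i)$ or $(g_i,g_{i-1})$ is an arc. The minimum weak connection length in $G$ relative to $(L,R)$ is the minimum positive length $k$ of a word $s_1\cdots s_k$ whose letters all lie in $L$, or all lie in $L^{-1}$, or all lie in $R$, or all lie in $R^{-1}$, and whose value is weakly connected to $e$; it is infinite if no such word exists. $N_G(L)=\{g\in G: g^{-1}Lg=L\}$ is the normalizer of the subset $L$. *)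

From Stdlib Require Import List Arith Relations.
Import ListNotations.

Record group := Group {
  carrier :> Type;
  mul : carrier -> carrier -> carrier;
  one : carrier;
  inv : carrier -> carrier;
  mulA : forall x y z, mul x (mul y z) = mul (mul x y) z;
  mul1g : forall x, mul one x = x;
  mulg1 : forall x, mul x one = x;
  mulVg : forall x, mul (inv x) x = one;
  mulgV : forall x, mul x (inv x) = one
}.

Section Defs.
Variable G : group.
Implicit Types (L R S : G -> Prop) (g h x : G).

Definition lprod (s : list G) : G := fold_right (@mul G) (one G) s.

Definition setV S : G -> Prop := fun x => S (inv G x).
Definition setbar S : G -> Prop := fun x => S x \/ S (inv G x).

Definition Wgen S : G -> Prop :=
  fun x => exists s : list G, s <> [] /\ Forall S s /\ lprod s = x.

Definition arc L R g h : Prop :=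
  exists l r, L l /\ R r /\ h = mul G (mul G (inv G l) g) r.

Definition weak L R : G -> G -> Prop :=
  clos_refl_trans G (fun x y => arc L R x y \/ arc L R y x).

Definition word_in S (k : nat) x : Prop :=
  exists s : list G, length s = k /\ Forall S s /\ lprod s = x.

Definition is_conn_len L R (k : nat) : Prop :=
  1 <= k /\ exists x,
    (word_in L k x \/ word_in (setV L) k x \/ word_in R k x \/ word_in (setV R) k x)
    /\ weak L R x (one G).

Definition min_conn_len L R (k : nat) : Prop :=
  is_conn_len L R k /\ forall j, is_conn_len L R j -> k <= j.

Definition conn_len_infinite L R : Prop := forall j, ~ is_conn_len L R j.

Definition normalizes L g : Prop :=
  forall x, (exists l, L l /\ x = mul G (mul G (inv G g) l) g) <-> L x.

End Defs.

Arguments lprod {G}. Arguments setV {G}. Arguments setbar {G}. Arguments Wgen {G}.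
Arguments arc {G}. Arguments weak {G}. Arguments word_in {G}.
Arguments is_conn_len {G}. Arguments min_conn_len {G}. Arguments conn_len_infinite {G}.
Arguments normalizes {G}.

(* Fix l0 in L and r0 in R.  For l in L the elements l y and l0 y are weakly
   connected (through y r0), and for r in R so are y r and l0 y; likewise with
   l0^-1 for letters of L^-1 and R^-1.  Left multiplication by l0 and by l0^-1
   maps weak components to weak components.  Hence, as G = W(L̄)W(R̄), every
   element is weakly connected to a power of l0; a word of length j in one of
   L, L^-1, R, R^-1 is weakly connected to l0^j or l0^-j, so the minimum weak
   connection length k is the least j > 0 with l0^j ~ e, and the components are
   exactly those of e, l0, ..., l0^(k-1) (infinitely many distinct ones if no
   such j exists).  Left multiplication by a suitable power of l0 carries any
   component bijectively onto any other.  If l0 normalizes L, this map also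
   preserves arcs; if some r1 in R normalizes R, right multiplication by a power
   of r1 does, and y r1^m ~ l0^m y shows that it moves components the same way. *)
From Stdlib Require Import List Arith Relations Setoid Lia ProofIrrelevance.

Local Infix "**" := (mul _) (at level 40, left associativity).

Section GroupFacts.
Variable G : group.
Implicit Types x y : G.

Lemma mulKg x y : inv G x ** (x ** y) = y.
Proof. rewrite mulA, mulVg, mul1g; reflexivity. Qed.

Lemma mulKVg x y : x ** (inv G x ** y) = y.
Proof. rewrite mulA, mulgV, mul1g; reflexivity. Qed.

Lemma invK x : inv G (inv G x) = x.
Proof.
  rewrite <- (mulg1 G (inv G (inv G x))), <- (mulVg G x), mulA, mulVg, mul1g.
  reflexivity.
Qed.

End GroupFacts.

Ltac group_simpl := repeat rewrite <- mulA;
  repeat rewrite ?invK, ?mulKg, ?mulKVg, ?mulVg, ?mulgV, ?mul1g, ?mulg1.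

Fixpoint npow {G : group} (x : G) (n : nat) : G :=
  match n with 0 => one G | S n => x ** npow x n end.

Section Products.
Variable G : group.
Implicit Types x y : G.

Lemma invM x y : inv G (x ** y) = inv G y ** inv G x.
Proof.
  assert (E : (x ** y) ** (inv G y ** inv G x) = one G) by (group_simpl; reflexivity).
  rewrite <- (mulg1 G (inv G (x ** y))), <- E, mulA, mulVg, mul1g. reflexivity.
Qed.

Lemma npow_Sr x n : npow x (S n) = npow x n ** x.
Proof.
  induction n as [|n IH]; simpl in *; [group_simpl; reflexivity|].
  rewrite <- mulA, <- IH. reflexivity.
Qed.

Lemma npow_add x m n : npow x (m + n) = npow x m ** npow x n.
Proof. induction m as [|m IH]; simpl; [group_simpl|rewrite IH; group_simpl]; reflexivity. Qed.

Lemma npowVK x n y : npow (inv G x) n ** (npow x n ** y) = y.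
Proof.
  revert y; induction n as [|n IH]; intro y; [simpl; group_simpl; reflexivity|].
  rewrite (npow_Sr (inv G x)). cbn [npow]. group_simpl. apply IH.
Qed.

Lemma npowKV x n y : npow x n ** (npow (inv G x) n ** y) = y.
Proof. rewrite <- (invK G x) at 1. apply npowVK. Qed.

Lemma npow_Vmul x n : npow (inv G x) n ** npow x n = one G.
Proof. rewrite <- (mulg1 G (npow x n)). apply npowVK. Qed.

Lemma npow_mulV x n : npow x n ** npow (inv G x) n = one G.
Proof. rewrite <- (mulg1 G (npow (inv G x) n)). apply npowKV. Qed.

Lemma lprod_repeat x n : lprod (repeat x n) = npow x n.
Proof. induction n as [|n IH]; [reflexivity|]. cbn. unfold lprod in *. rewrite IH. reflexivity. Qed.

Lemma lprod_lmul_closed (A P : G -> Prop) (s : list G) y :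
  (forall x z, A x -> P z -> P (x ** z)) -> Forall A s -> P y -> P (lprod s ** y).
Proof.
  intros HP Hs Hy. induction Hs as [|x s Hx _ IH]; cbn; [rewrite mul1g; exact Hy|].
  rewrite <- mulA. apply HP; assumption.
Qed.

Lemma lprod_rmul_closed (A P : G -> Prop) (s : list G) y :
  (forall x z, A x -> P z -> P (z ** x)) -> Forall A s -> P y -> P (y ** lprod s).
Proof.
  intros HP Hs. revert y. induction Hs as [|x s Hx _ IH]; intros y Hy; cbn.
  - rewrite mulg1. exact Hy.
  - rewrite mulA. apply IH, HP; assumption.
Qed.

End Products.

Section WeakConnection.
Variable G : group.
Variables L R : G -> Prop.
Implicit Types a b g h : G.

Lemma weak_refl a : weak L R a a.
Proof. apply rt_refl. Qed.

Lemma weak_sym a b : weak L R a b -> weak L R b a.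
Proof.
  induction 1; [apply rt_step; tauto | apply rt_refl | eapply rt_trans; eassumption].
Qed.

Lemma weak_trans a b c : weak L R a b -> weak L R b c -> weak L R a c.
Proof. apply rt_trans. Qed.

Lemma weak_arc a b : arc L R a b -> weak L R a b.
Proof. intro; apply rt_step; tauto. Qed.

Lemma weak_arcV a b : arc L R b a -> weak L R a b.
Proof. intro; apply rt_step; tauto. Qed.

Lemma arcI l r g h : L l -> R r -> h = inv G l ** g ** r -> arc L R g h.
Proof. intros; exists l, r; auto. Qed.

Definition weak_stable (T : G -> G) :=
  forall a b, weak L R a b -> weak L R (T a) (T b).

Definition arc_invariant (T : G -> G) :=
  forall x y, arc L R x y <-> arc L R (T x) (T y).

Lemma weak_stable_of_arcs (T : G -> G) :
  (forall a b, arc L R a b -> weak L R (T a) (T b)) -> weak_stable T.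
Proof.
  intros HT a b Hab. induction Hab as [x y [Hxy|Hxy]| |]; eauto using weak_sym, weak_refl, weak_trans.
Qed.

Lemma weak_stable_npow c n : weak_stable (mul G c) -> weak_stable (mul G (npow c n)).
Proof.
  intros Hc. induction n as [|n IH]; intros a b Hab; simpl.
  - rewrite !mul1g. exact Hab.
  - rewrite <- !mulA. apply Hc, IH, Hab.
Qed.

Lemma arc_invariant_weak_stable T : arc_invariant T -> weak_stable T.
Proof. intro HT. apply weak_stable_of_arcs. intros a b Hab. apply weak_arc, (proj1 (HT a b)), Hab. Qed.

Lemma arc_invariant_can T T' :
  arc_invariant T -> (forall y, T (T' y) = y) -> arc_invariant T'.
Proof. intros HT HK x y. rewrite (HT (T' x)), !HK. reflexivity. Qed.

Lemma arc_invariant_lmul_npow c n :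
  arc_invariant (mul G c) -> arc_invariant (mul G (npow c n)).
Proof.
  unfold arc_invariant. intros Hc. induction n as [|n IH]; intros x y; simpl.
  - rewrite !mul1g. reflexivity.
  - rewrite <- !mulA, <- Hc. apply IH.
Qed.

Lemma arc_invariant_rmul_npow c n :
  arc_invariant (fun x => x ** c) -> arc_invariant (fun x => x ** npow c n).
Proof.
  unfold arc_invariant. intros Hc. induction n as [|n IH]; intros x y.
  - rewrite !mulg1. reflexivity.
  - rewrite npow_Sr, !mulA, <- (Hc (x ** npow c n)). apply IH.
Qed.

Lemma arc_invariant_normalizes_L l : normalizes L l -> arc_invariant (mul G l).
Proof.
  intros Hn x y. split.
  - intros [l' [r [Hl' [Hr ->]]]]. destruct (proj2 (Hn l') Hl') as [l'' [Hl'' ->]].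
    apply (arcI l'' r); auto. rewrite !invM. group_simpl. reflexivity.
  - intros [l' [r [Hl' [Hr E]]]].
    apply (arcI (inv G l ** l' ** l) r); [apply Hn; eauto | exact Hr |].
    rewrite <- (mulKg G l y), E, !invM. group_simpl. reflexivity.
Qed.

Lemma arc_invariant_normalizes_R r : normalizes R r -> arc_invariant (fun x => x ** r).
Proof.
  intros Hn x y. split.
  - intros [l [r' [Hl [Hr' ->]]]].
    apply (arcI l (inv G r ** r' ** r)); [exact Hl | apply Hn; eauto |].
    group_simpl. reflexivity.
  - intros [l [r' [Hl [Hr' E]]]]. destruct (proj2 (Hn r') Hr') as [r'' [Hr'' ->]].
    apply (arcI l r''); [exact Hl | exact Hr'' |].
    replace y with (y ** r ** inv G r) by (group_simpl; reflexivity).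
    rewrite E. group_simpl. reflexivity.
Qed.

Lemma component_bij g h (T T' : G -> G) :
  weak_stable T -> weak_stable T' ->
  (forall x, T' (T x) = x) -> (forall y, T (T' y) = y) -> weak L R (T g) h ->
  exists (f : {x : G | weak L R g x} -> {x : G | weak L R h x})
         (f' : {x : G | weak L R h x} -> {x : G | weak L R g x}),
    (forall x, f' (f x) = x) /\ (forall y, f (f' y) = y) /\
    (forall x, proj1_sig (f x) = T (proj1_sig x)).
Proof.
  intros HT HT' K K' Hgh.
  assert (into : forall x, weak L R g x -> weak L R h (T x))
    by (intros x Hx; eapply weak_trans; [apply weak_sym, Hgh | apply HT, Hx]).
  assert (back : forall y, weak L R h y -> weak L R g (T' y)).
  { intros y Hy. rewrite <- (K g) at 1. apply HT', (weak_trans _ _ _ Hgh Hy). }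
  exists (fun x => exist _ (T (proj1_sig x)) (into _ (proj2_sig x))).
  exists (fun y => exist _ (T' (proj1_sig y)) (back _ (proj2_sig y))).
  split; [|split]; [intros [x p] .. | reflexivity]; apply subset_eq_compat; simpl; auto.
Qed.

Lemma component_iso g h (T T' : G -> G) :
  arc_invariant T -> (forall x, T' (T x) = x) -> (forall y, T (T' y) = y) ->
  weak L R (T g) h ->
  exists (f : {x : G | weak L R g x} -> {x : G | weak L R h x})
         (f' : {x : G | weak L R h x} -> {x : G | weak L R g x}),
    (forall x, f' (f x) = x) /\ (forall y, f (f' y) = y) /\
    (forall x y, arc L R (proj1_sig x) (proj1_sig y) <->
                 arc L R (proj1_sig (f x)) (proj1_sig (f y))).
Proof.
  intros HT K K' Hgh.
  destruct (component_bij g h T T') as [f [f' [Hf [Hf' Ef]]]]; auto.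
  - apply arc_invariant_weak_stable, HT.
  - apply arc_invariant_weak_stable, (arc_invariant_can T); assumption.
  - exists f, f'. do 2 (split; [assumption|]). intros x y. rewrite !Ef. apply HT.
Qed.

Lemma weak_lprod_lmul (A : G -> Prop) c (s : list G) :
  (forall x y, A x -> weak L R (x ** y) (c ** y)) -> weak_stable (mul G c) ->
  Forall A s -> forall y, weak L R (lprod s ** y) (npow c (length s) ** y).
Proof.
  intros HA Hc Hs y. induction Hs as [|x s Hx _ IH]; cbn; [apply weak_refl|].
  rewrite <- !mulA. eapply weak_trans; [apply HA, Hx | apply Hc, IH].
Qed.

Lemma weak_lprod_rmul (A : G -> Prop) c (s : list G) :
  (forall x y, A x -> weak L R (y ** x) (c ** y)) -> weak_stable (mul G c) ->
  Forall A s -> forall y, weak L R (y ** lprod s) (npow c (length s) ** y).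
Proof.
  intros HA Hc Hs. induction Hs as [|x s Hx _ IH]; intro y; cbn.
  - group_simpl. apply weak_refl.
  - rewrite mulA. eapply weak_trans; [apply IH|].
    change (c ** npow c (length s)) with (npow c (S (length s))).
    rewrite npow_Sr, <- mulA. apply (weak_stable_npow c (length s) Hc), HA, Hx.
Qed.

Lemma weak_word_lmul (A : G -> Prop) c n x :
  (forall x y, A x -> weak L R (x ** y) (c ** y)) -> weak_stable (mul G c) ->
  word_in A n x -> weak L R x (npow c n).
Proof.
  intros HA Hc [s [<- [Hs <-]]].
  rewrite <- (mulg1 G (lprod s)), <- (mulg1 G (npow c _)). apply (weak_lprod_lmul A); auto.
Qed.

Lemma weak_word_rmul (A : G -> Prop) c n x :
  (forall x y, A x -> weak L R (y ** x) (c ** y)) -> weak_stable (mul G c) ->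
  word_in A n x -> weak L R x (npow c n).
Proof.
  intros HA Hc [s [<- [Hs <-]]].
  rewrite <- (mul1g G (lprod s)), <- (mulg1 G (npow c _)). apply (weak_lprod_rmul A); auto.
Qed.

Section BasePoint.
Variables l0 r0 : G.
Hypothesis Hl0 : L l0.
Hypothesis Hr0 : R r0.

Lemma weak_stable_l0 : weak_stable (mul G l0).
Proof.
  apply weak_stable_of_arcs. intros a b [l [r [Hl [Hr ->]]]].
  apply weak_trans with (a ** r); [apply weak_arc, (arcI l0 r); auto; group_simpl; reflexivity|].
  apply weak_trans with (inv G l ** a ** r ** r0);
    [apply weak_arc, (arcI l r0); auto; group_simpl; reflexivity|].
  apply weak_arcV, (arcI l0 r0); auto. group_simpl. reflexivity.
Qed.

Lemma weak_stable_l0V : weak_stable (mul G (inv G l0)).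
Proof.
  apply weak_stable_of_arcs. intros a b [l [r [Hl [Hr ->]]]].
  apply weak_trans with (a ** inv G r0);
    [apply weak_arcV, (arcI l0 r0); auto; group_simpl; reflexivity|].
  apply weak_trans with (inv G l ** a);
    [apply weak_arc, (arcI l r0); auto; group_simpl; reflexivity|].
  apply weak_arc, (arcI l0 r); auto. group_simpl. reflexivity.
Qed.

Lemma weak_lmul_L x y : L x -> weak L R (x ** y) (l0 ** y).
Proof.
  intro Hx. apply weak_trans with (y ** r0).
  - apply weak_arc, (arcI x r0); auto. group_simpl. reflexivity.
  - apply weak_arcV, (arcI l0 r0); auto. group_simpl. reflexivity.
Qed.

Lemma weak_lmul_LV x y : L (inv G x) -> weak L R (x ** y) (inv G l0 ** y).
Proof.
  intro Hx. apply weak_trans with (y ** inv G r0).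
  - apply weak_arcV, (arcI (inv G x) r0); auto. group_simpl. reflexivity.
  - apply weak_arc, (arcI l0 r0); auto. group_simpl. reflexivity.
Qed.

Lemma weak_rmul_R x y : R x -> weak L R (y ** x) (l0 ** y).
Proof. intro Hx. apply weak_arcV, (arcI l0 x); auto. group_simpl. reflexivity. Qed.

Lemma weak_rmul_RV x y : R (inv G x) -> weak L R (y ** x) (inv G l0 ** y).
Proof. intro Hx. apply weak_arc, (arcI l0 (inv G x)); auto. group_simpl. reflexivity. Qed.

Lemma weak_rmul_npow_R r n y : R r -> weak L R (y ** npow r n) (npow l0 n ** y).
Proof.
  intro Hr. rewrite <- (lprod_repeat G r n).
  replace (npow l0 n) with (npow l0 (length (repeat r n))) by (rewrite repeat_length; reflexivity).
  apply (weak_lprod_rmul (eq r)); [intros x z <-; apply weak_rmul_R, Hr | apply weak_stable_l0 |].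
  apply Forall_forall. intros x Hx. symmetry. apply (repeat_spec n r x Hx).
Qed.

Lemma weak_npow_of_conn_len k : is_conn_len L R k -> weak L R (npow l0 k) (one G).
Proof.
  intros [_ [x [Hw Hx]]].
  assert (HV : weak L R (npow (inv G l0) k) (one G) -> weak L R (npow l0 k) (one G)).
  { intro H. apply (weak_stable_npow l0 k weak_stable_l0), weak_sym in H.
    rewrite npow_mulV, mulg1 in H. exact H. }
  destruct Hw as [H|[H|[H|H]]]; [| apply HV | | apply HV];
    apply (weak_trans _ x); try exact Hx; apply weak_sym.
  - exact (weak_word_lmul L l0 k x weak_lmul_L weak_stable_l0 H).
  - exact (weak_word_lmul (setV L) (inv G l0) k x weak_lmul_LV weak_stable_l0V H).
  - exact (weak_word_rmul R l0 k x weak_rmul_R weak_stable_l0 H).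
  - exact (weak_word_rmul (setV R) (inv G l0) k x weak_rmul_RV weak_stable_l0V H).
Qed.

Lemma conn_len_of_weak_npow i j :
  i < j -> weak L R (npow l0 i) (npow l0 j) -> is_conn_len L R (j - i).
Proof.
  intros Hij H. apply (weak_stable_npow _ i weak_stable_l0V) in H.
  replace j with (i + (j - i)) in H by lia.
  rewrite npow_add, npowVK, npow_Vmul in H.
  split; [lia|]. exists (npow l0 (j - i)). split; [|apply weak_sym, H].
  left. exists (repeat l0 (j - i)). split; [apply repeat_length|]. split; [|apply lprod_repeat].
  apply Forall_forall. intros x Hx. apply repeat_spec in Hx. subst x. exact Hl0.
Qed.

Lemma weak_npow_inj n i j :
  (forall d, is_conn_len L R d -> n <= d) -> i < n -> j < n ->
  weak L R (npow l0 i) (npow l0 j) -> i = j.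
Proof.
  intros Hmin Hi Hj H. destruct (lt_eq_lt_dec i j) as [[Hij|<-]|Hji]; [| reflexivity |].
  - specialize (Hmin _ (conn_len_of_weak_npow i j Hij H)). lia.
  - specialize (Hmin _ (conn_len_of_weak_npow j i Hji (weak_sym _ _ H))). lia.
Qed.

Section Cycle.
Variable k : nat.
Hypothesis Hk : 1 <= k.
Hypothesis Hcycle : weak L R (npow l0 k) (one G).
Hypothesis hG : forall g : G,
  exists a b, Wgen (setbar L) a /\ Wgen (setbar R) b /\ g = a ** b.

Definition near_npow g := exists i, i < k /\ weak L R g (npow l0 i).

Lemma near_npow_weak g g' : weak L R g g' -> near_npow g' -> near_npow g.
Proof. intros H [i [Hi H']]. exists i. split; [exact Hi | eapply weak_trans; eassumption]. Qed.

Lemma near_npow_l0 g : near_npow g -> near_npow (l0 ** g).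
Proof.
  intros [i [Hi H]]. apply weak_stable_l0 in H.
  destruct (Nat.eq_dec (S i) k) as [<-|Hne].
  - exists 0. split; [lia|]. exact (weak_trans _ _ _ H Hcycle).
  - exists (S i). split; [lia | exact H].
Qed.

Lemma near_npow_l0V g : near_npow g -> near_npow (inv G l0 ** g).
Proof.
  intros [i [Hi H]]. apply weak_stable_l0V in H. destruct i as [|i].
  - exists (k - 1). split; [lia|]. eapply weak_trans; [exact H|].
    apply weak_sym. apply weak_stable_l0V in Hcycle.
    replace k with (S (k - 1)) in Hcycle by lia. simpl in Hcycle. rewrite mulKg in Hcycle.
    exact Hcycle.
  - exists i. split; [lia|]. simpl in H. rewrite mulKg in H. exact H.
Qed.

Lemma weak_npow_cover g : near_npow g.
Proof.
  destruct (hG g) as [a [b [[sa [_ [Ha <-]]] [[sb [_ [Hb <-]]] ->]]]].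
  rewrite <- (mul1g G (lprod sb)).
  apply (lprod_lmul_closed G (setbar L)); [|exact Ha|].
  - intros x z [Hx|Hx] Hz.
    + apply (near_npow_weak _ _ (weak_lmul_L x z Hx)), near_npow_l0, Hz.
    + apply (near_npow_weak _ _ (weak_lmul_LV x z Hx)), near_npow_l0V, Hz.
  - apply (lprod_rmul_closed G (setbar R)); [|exact Hb|].
    + intros x z [Hx|Hx] Hz.
      * apply (near_npow_weak _ _ (weak_rmul_R x z Hx)), near_npow_l0, Hz.
      * apply (near_npow_weak _ _ (weak_rmul_RV x z Hx)), near_npow_l0V, Hz.
    + exists 0. split; [lia | apply weak_refl].
Qed.

Lemma weak_npow_shift g h : exists m, weak L R (npow l0 m ** g) h.
Proof.
  destruct (weak_npow_cover g) as [i [Hi Hg]], (weak_npow_cover h) as [j [_ Hh]].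
  exists (j + (k - i)). eapply weak_trans; [apply (weak_stable_npow _ _ weak_stable_l0), Hg|].
  rewrite <- npow_add, <- Nat.add_assoc, Nat.sub_add, npow_add by lia.
  eapply weak_trans; [apply (weak_stable_npow _ j weak_stable_l0), Hcycle|].
  rewrite mulg1. apply weak_sym, Hh.
Qed.

End Cycle.
End BasePoint.
End WeakConnection.

Theorem mainTheorem9 (G : group) (L R : G -> Prop)
  (hL : exists l, L l) (hR : exists r, R r)
  (hG : forall g : G, exists a b, Wgen (setbar L) a /\ Wgen (setbar R) b /\ g = mul G a b) :
  (conn_len_infinite L R ->
     exists c : nat -> G, forall i j, weak L R (c i) (c j) -> i = j)
  /\
  (forall k, min_conn_len L R k ->
     (exists c : nat -> G,
        (forall i j, i < k -> j < k -> weak L R (c i) (c j) -> i = j) /\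
        (forall g : G, exists i, i < k /\ weak L R g (c i)))
     /\
     (forall g h : G, exists (f : {x : G | weak L R g x} -> {x : G | weak L R h x})
                             (f' : {x : G | weak L R h x} -> {x : G | weak L R g x}),
        (forall x, f' (f x) = x) /\ (forall y, f (f' y) = y))
     /\
     ((exists l, L l /\ normalizes L l) \/ (exists r, R r /\ normalizes R r) ->
      forall g h : G, exists (f : {x : G | weak L R g x} -> {x : G | weak L R h x})
                             (f' : {x : G | weak L R h x} -> {x : G | weak L R g x}),
        (forall x, f' (f x) = x) /\ (forall y, f (f' y) = y) /\
        (forall x y, arc L R (proj1_sig x) (proj1_sig y) <->
                     arc L R (proj1_sig (f x)) (proj1_sig (f y))))).
Proof.
  destruct hL as [l0 Hl0], hR as [r0 Hr0]. split.
  - intros Hinf. exists (npow l0). intros i j.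
    apply (weak_npow_inj G L R l0 r0 Hl0 Hr0 (S (Nat.max i j))); [|lia|lia].
    intros d Hd. destruct (Hinf d Hd).
  - intros k [Hk Hmin]. assert (Hk1 : 1 <= k) by apply Hk.
    pose proof (weak_npow_of_conn_len G L R l0 r0 Hl0 Hr0 k Hk) as Hcycle.
    split; [|split].
    + exists (npow l0). split; [exact (fun i j => weak_npow_inj G L R l0 r0 Hl0 Hr0 k i j Hmin)|].
      exact (weak_npow_cover G L R l0 r0 Hl0 Hr0 k Hk1 Hcycle hG).
    + intros g h. destruct (weak_npow_shift G L R l0 r0 Hl0 Hr0 k Hk1 Hcycle hG g h) as [m Hm].
      destruct (component_bij G L R g h (mul G (npow l0 m)) (mul G (npow (inv G l0) m))
        (weak_stable_npow G L R l0 m (weak_stable_l0 G L R l0 r0 Hl0 Hr0))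
        (weak_stable_npow G L R _ m (weak_stable_l0V G L R l0 r0 Hl0 Hr0))
        (npowVK G l0 m) (npowKV G l0 m) Hm) as [f [f' [Hf [Hf' _]]]].
      exists f, f'. auto.
    + intros [[l1 [Hl1 Hn]] | [r1 [Hr1 Hn]]] g h.
      * pose proof (weak_npow_of_conn_len G L R l1 r0 Hl1 Hr0 k Hk) as Hcycle1.
        destruct (weak_npow_shift G L R l1 r0 Hl1 Hr0 k Hk1 Hcycle1 hG g h) as [m Hm].
        apply (component_iso G L R g h (mul G (npow l1 m)) (mul G (npow (inv G l1) m)));
          [apply arc_invariant_lmul_npow, arc_invariant_normalizes_L, Hn
          | apply npowVK | apply npowKV | exact Hm].
      * destruct (weak_npow_shift G L R l0 r0 Hl0 Hr0 k Hk1 Hcycle hG g h) as [m Hm].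
        apply (component_iso G L R g h (fun x => x ** npow r1 m) (fun x => x ** npow (inv G r1) m)).
        -- apply arc_invariant_rmul_npow, arc_invariant_normalizes_R, Hn.
        -- intro x. rewrite <- mulA, npow_mulV, mulg1. reflexivity.
        -- intro x. rewrite <- mulA, npow_Vmul, mulg1. reflexivity.
        -- exact (weak_trans G L R _ _ _ (weak_rmul_npow_R G L R l0 r0 Hl0 Hr0 r1 m g Hr1) Hm).
Qed.
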